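(* Let $G$ be a graph and $k$ an integer, and assume: (A) $G$ contains no two adjacent vertices $u,w$ with $N(w)\subseteq N[u]$; and (B) there is no vertex $w$ of $G$ together with a partition $(C_1,C_2)$ of $N(w)$ such that $|C_1|\ge|C_2|$, $C_1$ and $C_2$ are cliques, and every vertex $c_1\in C_1$ lies in exactly one pair $\{c_1,c_2\}$ with $c_2\in C_2$ and $\{c_1,c_2\}\notin E(G)$. Let $v$ be a vertex of degree three with $N(v)=\{a,b,c\}$. Let $G'$ be the graph with vertex set $V(G)\setminus\{v\}$ whose edge set consists of the edges of $G-v$ together with the set $F$ of pairs $\{a,b\}$, $\{b,c\}$, $\{a,x\}$ for $x\in N_G(b)$, $\{b,y\}$ for $y\in N_G(c)$, and $\{c,z\}$ for $z\in N_G(a)$ (pairs containing $v$ being omitted). Then $G$ has a vertex cover of size $k$ if and only if $G'$ has a vertex cover of size $k$.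
   Context: All graphs are finite, simple, undirected. $N(x)=N_G(x)$ is the open and $N[x]=N(x)\cup\{x\}$ the closed neighborhood. A clique is a set of pairwise adjacent vertices. A vertex cover is a set of vertices containing at least one endpoint of every edge; ''has a vertex cover of size $k$'' means has a vertex cover of size at most $k$. *)

From mathcomp Require Import all_boot.
Set Implicit Arguments. Unset Strict Implicit. Unset Printing Implicit Defensive.

Section Graphs.
Variable T : finType.
Implicit Types (e : rel T) (S : {set T}).

Definition N e (x : T) : {set T} := [set y | e x y].
Definition Nc e (x : T) : {set T} := x |: N e x.

Definition simple_graph e := symmetric e /\ irreflexive e.

Definition clique e S := forall x y, x \in S -> y \in S -> x != y -> e x y.

Definition vertex_cover e S := forall x y, e x y -> (x \in S) || (y \in S).

(* "has a vertex cover of size k" = of size at most k *)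
Definition has_vc e (k : nat) := exists S : {set T}, vertex_cover e S /\ #|S| <= k.

Definition condA e := ~ exists u w, e u w /\ N e w \subset Nc e u.

Definition condB e :=
  ~ exists w (C1 C2 : {set T}),
      [/\ C1 :|: C2 = N e w, [disjoint C1 & C2], #|C2| <= #|C1|,
          clique e C1 /\ clique e C2 &
          forall c1, c1 \in C1 -> #|[set c2 in C2 | ~~ e c1 c2]| = 1].
End Graphs.

(* The set F of new pairs (as an ordered test; symmetrized below). *)
Definition Fpair (T : finType) (e : rel T) (a b c : T) (p q : T) : bool :=
  [|| (p == a) && (q == b), (p == b) && (q == c),
      (p == a) && e b q, (p == b) && e c q | (p == c) && e a q].

Definition Gprime (T : finType) (e : rel T) (v a b c : T) :
    rel {x : T | x != v} :=
  fun x y => (val x != val y) &&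
    [|| e (val x) (val y), Fpair e a b c (val x) (val y)
      | Fpair e a b c (val y) (val x)].
Arguments Gprime {T} e v a b c.

From mathcomp Require Import all_boot.

(* By (A) and (B) the neighbours a, b, c of v are pairwise nonadjacent.  A set
   avoiding v then covers G' iff it covers G - v, contains a or b and b or c,
   and for every arc (x, y) of the cycle a -> b -> c -> a contains x or every
   neighbour of y but v.  If such a cover misses some of a, b, c, it misses the
   tail x of an arc (x, y) whose head y it contains, and trading y for v gives
   a cover of G.  Conversely, a cover of G containing v but missing some of
   a, b, c becomes a cover of G' by trading v for such a tail x (or for b when
   it misses all three). *)

Set Implicit Arguments.
Unset Strict Implicit.
Unset Printing Implicit Defensive.

Section VertexCovers.
Variables (T : finType) (e : rel T).
Hypotheses (esym : symmetric e) (eirr : irreflexive e).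
Implicit Types (S : {set T}) (v x y : T).

Lemma vertex_coverS S S' : S \subset S' -> vertex_cover e S -> vertex_cover e S'.
Proof.
move=> /subsetP sSS' cov x y /cov /orP[/sSS'-> // | /sSS'->]; exact: orbT.
Qed.

Lemma vertex_cover_N S x : vertex_cover e S -> x \notin S -> N e x \subset S.
Proof.
by move=> cov xS; apply/subsetP => y; rewrite inE => /cov; rewrite (negbTE xS).
Qed.

Lemma N_neq x y : y \in N e x -> y != x.
Proof. by rewrite inE; apply: contraTneq => ->; rewrite eirr. Qed.

Lemma vertex_cover_setU1 S v :
  N e v \subset S -> vertex_cover e (v |: S) -> vertex_cover e S.
Proof.
move=> /subsetP sNS cov x y exy; have := cov x y exy; rewrite !inE.
case: (eqVneq x v) exy => [-> evy _ | _ exy /=]; first by rewrite (sNS y) ?orbT // inE.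
by case: (eqVneq y v) exy => [-> exv _ | //]; rewrite (sNS x) // inE esym.
Qed.

Lemma vertex_cover_swap S v y :
  N e y :\ v \subset S -> vertex_cover e (v |: S) -> vertex_cover e (v |: S :\ y).
Proof.
move=> /subsetP sNS cov x z exz; have := cov x z exz; rewrite !inE.
case: (eqVneq x v) => //= xv.
case: (eqVneq z v) => [-> _ | zv /=]; first by rewrite /= !orbT.
have NyS w : e y w -> w != v -> w \in S by move=> eyw wv; apply: sNS; rewrite !inE wv.
case: (eqVneq x y) exz => [-> eyz _ | xy exz /=].
  by rewrite /= NyS // andbT; apply: N_neq; rewrite inE.
by case: (eqVneq z y) exz => [-> exy _ | //=]; rewrite NyS // esym.
Qed.

End VertexCovers.

Lemma leq_card_setU1D1 (T : finType) (S : {set T}) x y :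
  (x \in S) || (y \in S) -> #|x |: S :\ y| <= #|S|.
Proof.
case/orP=> [xS | yS].
  by apply/subset_leq_card/subsetP => w; rewrite !inE => /orP[/eqP-> // | /andP[]].
by rewrite cardsU1 [leqRHS](cardsD1 y) yS; case: (_ \notin _).
Qed.

Lemma has_vc_sub (T : finType) (P : pred T) (e : rel T) k :
  has_vc (fun x y : {x | P x} => e (val x) (val y)) k <->
  has_vc [rel x y | [&& P x, P y & e x y]] k.
Proof.
split=> [[S' [cov leS'k]] | [S [cov leSk]]].
  exists (val @: S'); split; last by rewrite card_imset //; exact: val_inj.
  move=> x y /and3P[Px Py exy]; have := cov (Sub x Px) (Sub y Py) exy.
  by case/orP=> /(imset_f val) ->; rewrite ?orbT.
exists [set x | val x \in S]; split.
  by move=> x y exy; rewrite !inE; apply: cov; rewrite /= (valP x) (valP y).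
apply: leq_trans leSk; rewrite -(card_imset _ val_inj).
by apply/subset_leq_card/subsetP => y /imsetP[x xS ->]; rewrite inE in xS.
Qed.

Section IndependentNeighbourhood.
Variables (T : finType) (e : rel T).
Hypotheses (esym : symmetric e) (eirr : irreflexive e) (hA : condA e) (hB : condB e).

Lemma nbhd3_indep v x y z :
  N e v = [set x; y; z] -> x != z -> y != z -> ~~ e x y.
Proof.
move=> Nv xz yz; apply/negP => exy.
have xy : x != y by apply: contraTneq exy => ->; rewrite eirr.
have inNv w : (w \in N e v) = e v w by rewrite inE.
have Nv_sub_Nc u :
    [&& (x == u) || e u x, (y == u) || e u y & (z == u) || e u z] ->
  N e v \subset Nc e u.
  case/and3P=> ux uy uz; rewrite Nv; apply/subsetP => w.
  by rewrite !inE => /orP[/orP[]|] /eqP->.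
case exz: (e x z).
  apply: hA; exists x, v; split; first by rewrite esym -inNv Nv !inE eqxx.
  by apply: Nv_sub_Nc; rewrite eqxx exy exz !orbT.
case eyz: (e y z).
  apply: hA; exists y, v; split; first by rewrite esym -inNv Nv !inE eqxx orbT.
  by apply: Nv_sub_Nc; rewrite eqxx esym exy eyz !orbT.
apply: hB; exists v, [set x; y], [set z]; split.
- by rewrite Nv.
- by rewrite disjoint_sym disjoints1 !inE negb_or !(eq_sym z) xz yz.
- by rewrite cards1 cards2 xy.
- split=> u w; rewrite !inE; last by move=> /eqP-> /eqP->; rewrite eqxx.
  by move=> /orP[]/eqP-> /orP[]/eqP->; rewrite ?eqxx // esym.
- move=> u; rewrite !inE => /orP[]/eqP->; apply/eqP/cards1P; exists z;
    by apply/setP => w; rewrite !inE; case: eqP => // ->; rewrite ?exz ?eyz.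
Qed.

Lemma nbhd_indep v : #|N e v| = 3 -> {in N e v &, forall x y, ~~ e x y}.
Proof.
move=> h3 x y Nx Ny; case: (eqVneq x y) => [-> | xy]; first by rewrite eirr.
have sub_xy : [set x; y] \subset N e v.
  by apply/subsetP => w /set2P[]->.
have /cards1P[z Nz] : #|N e v :\: [set x; y]| == 1.
  by rewrite cardsD (setIidPr sub_xy) h3 cards2 xy.
have /setDP[_] : z \in N e v :\: [set x; y] by rewrite Nz set11.
rewrite !inE negb_or => /andP[zx zy].
apply: (@nbhd3_indep v _ _ z); rewrite 1?eq_sym //.
by rewrite -(setID (N e v) [set x; y]) (setIidPr sub_xy) Nz.
Qed.

End IndependentNeighbourhood.

Section Arcs3.
Variables (T : eqType) (a b c : T).

Definition arcs3 : seq (T * T) := [:: (a, b); (b, c); (c, a)].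

Lemma arcs3_step (p : pred T) :
  [|| p a, p b | p c] -> ~~ [&& p a, p b & p c] ->
  exists2 xy, xy \in arcs3 & ~~ p xy.1 && p xy.2.
Proof.
case pa: (p a); case pb: (p b); case pc: (p c) => //= _ _;
  [exists (c, a) | exists (b, c) | exists (c, a)
  | exists (a, b) | exists (a, b) | exists (b, c)];
  by rewrite /= ?pa ?pb ?pc // !inE eqxx ?orbT.
Qed.

Lemma arcs3_cover (p : pred T) xy :
  xy \in arcs3 -> p xy.1 -> p xy.2 -> (p a || p b) && (p b || p c).
Proof. by rewrite !inE => /or3P[]/eqP-> /= -> ->; rewrite ?orbT. Qed.

Lemma arcs3_adj x0 y0 x y : (x0, y0) \in arcs3 -> (x, y) \in arcs3 ->
  [|| x == x0, x == y0 | y == x0].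
Proof.
by rewrite !inE => /or3P[]/eqP[-> ->] /or3P[]/eqP[-> ->]; rewrite eqxx ?orbT.
Qed.

End Arcs3.

Definition Gprime_rel (T : finType) (e : rel T) (a b c : T) : rel T :=
  fun x y => (x != y) && [|| e x y, Fpair e a b c x y | Fpair e a b c y x].

Lemma Fpair_arcs3 (T : finType) (e : rel T) a b c x y q :
  (x, y) \in arcs3 a b c -> e y q -> Fpair e a b c x q.
Proof. by rewrite !inE => /or3P[]/eqP[-> ->] eyq; rewrite /Fpair eqxx eyq ?orbT. Qed.

Lemma FpairP (T : finType) (e : rel T) a b c x q : Fpair e a b c x q ->
  [\/ x = a /\ q = b, x = b /\ q = c | exists2 y, (x, y) \in arcs3 a b c & e y q].
Proof.
rewrite /Fpair; case/orP=> [/andP[/eqP-> /eqP->] | ]; first by constructor 1.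
case/orP=> [/andP[/eqP-> /eqP->] | ]; first by constructor 2.
by case/or3P=> /andP[/eqP-> eq]; constructor 3; [exists b | exists c | exists a];
  rewrite // !inE eqxx ?orbT.
Qed.

Section Reduction.
Variables (T : finType) (e : rel T) (v a b c : T).
Hypotheses (esym : symmetric e) (eirr : irreflexive e).
Hypothesis Nv : N e v = [set a; b; c].
Hypothesis Nv_indep : {in N e v &, forall x y, ~~ e x y}.
Hypotheses (ab : a != b) (bc : b != c).
Implicit Types S : {set T}.

(* [G'] with [v] kept as an isolated vertex, so that its covers are sets of [T]. *)
Definition Gprime_with_v : rel T :=
  [rel x y | [&& x != v, y != v & Gprime_rel e a b c x y]].

Lemma subset_Nv S : (N e v \subset S) = [&& a \in S, b \in S & c \in S].
Proof. by rewrite Nv !subUset !sub1set andbA. Qed.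

Lemma arcs3_Nv x y : (x, y) \in arcs3 a b c -> x \in N e v /\ y \in N e v.
Proof. by rewrite Nv !inE => /or3P[]/eqP[-> ->]; split; rewrite eqxx ?orbT. Qed.

Lemma Gprime_with_v_coverP S :
  vertex_cover Gprime_with_v S <->
  [/\ vertex_cover e (v |: S), (a \in S) || (b \in S), (b \in S) || (c \in S) &
      forall x y, (x, y) \in arcs3 a b c -> x \notin S -> N e y :\ v \subset S].
Proof.
have [av bv cv] : [/\ a != v, b != v & c != v].
  by split; apply: (N_neq eirr); rewrite Nv !inE eqxx ?orbT.
split=> [cov | [cov abS bcS arcS] x y].
  have edge x y : x != v -> y != v -> x != y -> e x y || Fpair e a b c x y ->
      (x \in S) || (y \in S).
    move=> xv yv xy exy; apply: cov; rewrite /Gprime_with_v /Gprime_rel /= xv yv xy /=.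
    by case/orP: exy => ->; rewrite ?orbT.
  split; [| by apply: edge; rewrite // /Fpair !eqxx /= ?orbT
          | by apply: edge; rewrite // /Fpair !eqxx /= ?orbT |].
  - move=> x y exy; rewrite !inE; case: (eqVneq x v) => //= xv.
    case: (eqVneq y v) => [_ | yv]; first by rewrite /= orbT.
    apply: edge; rewrite ?exy //; by apply: contraTneq exy => ->; rewrite eirr.
  - move=> x y xy xS; have [Nx Ny] := arcs3_Nv xy.
    apply/subsetP => q; rewrite !inE => /andP[qv eyq].
    have xq : x != q by apply: contraTneq eyq => <-; rewrite Nv_indep.
    have := edge x q (N_neq eirr Nx) qv xq.
    by rewrite (negbTE xS) (Fpair_arcs3 xy eyq) orbT; apply.
have Fcov x' y' : Fpair e a b c x' y' -> y' != v -> (x' \in S) || (y' \in S).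
  case/FpairP=> [[-> ->] | [-> ->] | [z xz ezy]] // y'v.
  case: (boolP (x' \in S)) => //= x'S.
  by apply: (subsetP (arcS _ _ xz x'S)); rewrite !inE y'v.
rewrite /= => /and3P[xv yv /andP[_ /or3P[exy | F | F]]].
- by have := cov x y exy; rewrite !inE (negbTE xv) (negbTE yv).
- exact: Fcov.
- by rewrite orbC; apply: Fcov.
Qed.

Lemma cover_of_Gprime_cover S :
  vertex_cover Gprime_with_v S -> exists2 S', vertex_cover e S' & #|S'| <= #|S|.
Proof.
case/Gprime_with_v_coverP=> cov abS _ arcS.
have [NvS | not_NvS] := boolP (N e v \subset S).
  by exists S => //; apply: vertex_cover_setU1 cov.
have someS : [|| a \in S, b \in S | c \in S] by case/orP: abS => ->; rewrite ?orbT.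
rewrite subset_Nv in not_NvS.
have [[x y] xy /= /andP[xS yS]] := arcs3_step (p := fun x => x \in S) someS not_NvS.
exists (v |: S :\ y); first exact: vertex_cover_swap (arcS _ _ xy xS) cov.
by apply: leq_card_setU1D1; rewrite yS orbT.
Qed.

Lemma mem_setU1D1_v S r x : x \in S -> x \in N e v -> x \in r |: S :\ v.
Proof. by move=> xS /(N_neq eirr) xv; rewrite !inE xS xv orbT. Qed.

Lemma Gprime_with_v_cover_trade S r : vertex_cover e S ->
    (a \in r |: S :\ v) || (b \in r |: S :\ v) ->
    (b \in r |: S :\ v) || (c \in r |: S :\ v) ->
    (forall x y, (x, y) \in arcs3 a b c -> (x \in r |: S :\ v) || (y \notin S)) ->
  vertex_cover Gprime_with_v (r |: S :\ v).
Proof.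
move=> cov abS bcS arcS; apply/Gprime_with_v_coverP; split => //.
  apply: vertex_coverS cov; apply/subsetP => x xS.
  by rewrite !inE xS andbT; case: (x == v); rewrite ?orbT.
move=> x y xy xS0; have := arcS x y xy; rewrite (negbTE xS0) /= => yS.
exact: subset_trans (setSD _ (vertex_cover_N cov yS)) (subsetUr _ _).
Qed.

Lemma Gprime_cover_of_cover S :
  vertex_cover e S -> exists2 S0, vertex_cover Gprime_with_v S0 & #|S0| <= #|S|.
Proof.
move=> cov.
suff [r rvS covr] : exists2 r, (r \in S) || (v \in S) &
    vertex_cover Gprime_with_v (r |: S :\ v).
  by exists (r |: S :\ v) => //; apply: leq_card_setU1D1.
have [NvS | not_NvS] := boolP (N e v \subset S).
  exists a; first by rewrite (subsetP NvS) // Nv !inE eqxx.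
  have NvS0 x : x \in N e v -> x \in a |: S :\ v.
    by move=> Nx; rewrite mem_setU1D1_v ?(subsetP NvS).
  apply: Gprime_with_v_cover_trade => // [||x y /arcs3_Nv[Nx _]];
    by rewrite NvS0 // Nv !inE eqxx ?orbT.
have vS : v \in S.
  case/subsetPn: not_NvS => x; rewrite inE => evx /negbTE xS.
  by have := cov v x evx; rewrite xS orbF.
rewrite subset_Nv in not_NvS.
have [someS | noneS] := boolP [|| a \in S, b \in S | c \in S].
  have [[x0 y0] xy0 /= /andP[x0S y0S]] :=
    arcs3_step (p := fun x => x \in S) someS not_NvS.
  exists x0; first by rewrite vS orbT.
  have x0S0 : x0 \in x0 |: S :\ v by rewrite setU11.
  have y0S0 : y0 \in x0 |: S :\ v by rewrite mem_setU1D1_v // (arcs3_Nv xy0).2.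
  case/andP: (arcs3_cover xy0 x0S0 y0S0) => abS bcS.
  apply: Gprime_with_v_cover_trade abS bcS _ => // x y xy.
  by case/or3P: (arcs3_adj xy0 xy) => /eqP->; rewrite ?x0S0 ?y0S0 ?x0S ?orbT.
exists b; first by rewrite vS orbT.
apply: Gprime_with_v_cover_trade => // [||x y /arcs3_Nv[_ Ny]];
  rewrite ?setU11 ?orbT //.
apply/orP; right; move: Ny noneS; rewrite Nv !inE => /orP[/orP[]|] /eqP->.
all: by apply: contraNN => ->; rewrite ?orbT.
Qed.

End Reduction.

Theorem proposition6 (T : finType) (e : rel T) (k : nat) (v a b c : T) :
  simple_graph e ->
  condA e ->
  condB e ->
  #|N e v| = 3 ->
  N e v = [set a; b; c] ->
  has_vc e k <-> has_vc (Gprime e v a b c) k.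
Proof.
move=> [esym eirr] hA hB h3 Nv.
have Nv_indep := nbhd_indep esym eirr hA hB h3.
have [ab bc] : a != b /\ b != c.
  move: h3; rewrite Nv -setUA cardsU1 cards2 !inE.
  by case: (a == b); case: (b == c); case: (a == c).
apply: (iff_trans _ (iff_sym (has_vc_sub (fun x => x != v) (Gprime_rel e a b c) k))).
split=> [[S [cov leSk]] | [S [cov leSk]]].
  have [S0 cov0 leS0S] := Gprime_cover_of_cover eirr Nv Nv_indep ab bc cov.
  by exists S0; split; last exact: leq_trans leSk.
have [S' cov' leS'S] := cover_of_Gprime_cover esym eirr Nv Nv_indep ab bc cov.
by exists S'; split; last exact: leq_trans leSk.
Qed.
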